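(* Under the standing assumptions below, let $P\in M_2(\mathbb C)$ be a rank-one idempotent with $\theta(S_1)\subseteq\overline B_P(12\delta)\cup\overline B_{I-P}(12\delta)$, and set $S_p=\theta^{-1}(\overline B_P(12\delta))$, $S_q=\theta^{-1}(\overline B_{I-P}(12\delta))$. Let $e\in S_2$. If $f\in S_p$ then $ef\in S_p$; if $f\in S_q$ then $ef\in S_q$.
   Context: Standing assumptions: $S$ is a semilattice (commutative semigroup of idempotents), $0\le\delta<0.03$, and $\theta:S\to M_2(\mathbb C)$ satisfies $\|\theta(e)\theta(f)-\theta(ef)\|_{HS}\le\delta$ for all $e,f\in S$, where $\|A\|_{HS}=(\operatorname{tr}(A^*A))^{1/2}$. For $k\in\{0,1,2\}$, $S_k=\{x\in S:\ |\operatorname{tr}\theta(x)-k|<0.95\}$; these sets are pairwise disjoint and cover $S$. $\overline B_A(r)=\{B\in M_2(\mathbb C):\|A-B\|_{HS}\le r\}$. *)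

From HB Require Import structures.
From mathcomp Require Import all_boot all_order all_algebra.
Set Implicit Arguments. Unset Strict Implicit. Unset Printing Implicit Defensive.
Import Order.TTheory GRing.Theory Num.Theory.
Local Open Scope ring_scope.

(* Complex numbers are modelled by an arbitrary numClosedFieldType C
   (algebraically closed field with conjugation, norm and partial order);
   the complex field is an instance, so the statement is (slightly) more general. *)

Definition adjmx (C : numClosedFieldType) (m n : nat) (A : 'M[C]_(m, n)) : 'M[C]_(n, m) :=
  (map_mx Num.conj A)^T.

Definition hsnorm (C : numClosedFieldType) (n : nat) (A : 'M[C]_n) : C :=
  sqrtC (\tr (adjmx A *m A)).

Definition in_cball (C : numClosedFieldType) (n : nat) (A : 'M[C]_n) (r : C) (B : 'M[C]_n) : Prop :=
  hsnorm (A - B) <= r.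

Definition Sk (C : numClosedFieldType) (S : Type) (theta : S -> 'M[C]_2) (k : nat) (x : S) : Prop :=
  `|\tr (theta x) - k%:R| < 95%:R / 100%:R.

Definition is_semilattice (S : Type) (mul : S -> S -> S) : Prop :=
  (forall a b c, mul a (mul b c) = mul (mul a b) c) /\
  (forall a b, mul a b = mul b a) /\
  (forall a, mul a a = a).

From HB Require Import structures.
From mathcomp Require Import all_boot all_order all_algebra.
From mathcomp Require Import ring lra.
Import Order.TTheory GRing.Theory Num.Theory.
Local Open Scope ring_scope.
Set Implicit Arguments. Unset Strict Implicit. Unset Printing Implicit Defensive.

(* Let e be in S_2 and put A = theta e, F = theta f, G = theta (ef).  Since
   e e = e and e (e f) = e f, the matrix A is delta-almost idempotent, almost
   fixes G and almost maps F to G.  By Cayley-Hamilton,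
     det A * X = (tr A - 1) A X - (A^2 - A) X,
   and a discriminant computation shows that an almost idempotent 2x2 matrix
   with trace near 2 has |det A| >= 0.83 and |tr A - 1| <= 1.1; applied to
   X = G - F this gives |G - F| <= 2.75 delta.  So if F is 12 delta-close to
   an idempotent Q of trace 1, then |Q - G| < 0.45, whence |tr G - 1| < 0.95,
   i.e. e f lies in S_1, and G is 12 delta-close to Q or to 1 - Q.  The latter
   is impossible because Q and 1 - Q are at distance >= 1, the reflection
   Q - (1 - Q) squaring to the identity.  A rank-one idempotent P has trace 1,
   as does 1 - P, which gives both halves of the proposition. *)

(* The real elements of a numeric closed field form a real field, ordered and
   normed as in C.  Moduli and norms are taken with values in this field, so
   that all numerical estimates are decided by real arithmetic. *)
Section RealElements.
Variable C : numClosedFieldType.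

Record creal := CReal {cval :> C; cvalP : cval \is Num.real}.

HB.instance Definition _ := [isSub for cval].
HB.instance Definition _ := [Choice of creal by <:].
HB.instance Definition _ := [SubChoice_isSubIntegralDomain of creal by <:].
HB.instance Definition _ := [SubIntegralDomain_isSubField of creal by <:].
HB.instance Definition _ : Order.isPOrder ring_display creal :=
  Order.CancelPartial.Pcan _ valK.

Lemma creal_le_total : total (<=%O : rel (creal : porderType _)).
Proof. by move=> x y; apply/real_leVge/valP/valP. Qed.
HB.instance Definition _ := Order.POrder_isTotal.Build _ creal creal_le_total.

Lemma cval_is_zmod_morphism : zmod_morphism cval. Proof. by []. Qed.
Lemma cval_is_monoid_morphism : monoid_morphism cval. Proof. by []. Qed.
HB.instance Definition _ := GRing.isZmodMorphism.Build creal C cval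
  cval_is_zmod_morphism.
HB.instance Definition _ := GRing.isMonoidMorphism.Build creal C cval
  cval_is_monoid_morphism.

Definition creal_norm (x : creal) : creal := CReal (normr_real (val x)).

Lemma creal_ler_normD x y : creal_norm (x + y) <= creal_norm x + creal_norm y.
Proof. exact: ler_normD. Qed.
Lemma creal_normr0_eq0 x : creal_norm x = 0 -> x = 0.
Proof. by move=> /(congr1 val)/normr0_eq0 ?; apply/val_inj. Qed.
Lemma creal_normrMn x n : creal_norm (x *+ n) = creal_norm x *+ n.
Proof. by apply/val_inj; rewrite /= !rmorphMn/= normrMn. Qed.
Lemma creal_normrN x : creal_norm (- x) = creal_norm x.
Proof. by apply/val_inj; apply: normrN. Qed.
HB.instance Definition _ := Num.Zmodule_isNormed.Build _ creal
  creal_ler_normD creal_normr0_eq0 creal_normrMn creal_normrN.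

Lemma creal_addr_gt0 (x y : creal) : 0 < x -> 0 < y -> 0 < x + y.
Proof. exact: addr_gt0. Qed.
Lemma creal_ger_leVge (x y : creal) : 0 <= x -> 0 <= y -> (x <= y) || (y <= x).
Proof. exact: ger_leVge. Qed.
Lemma creal_normrM : {morph creal_norm : x y / x * y}.
Proof. by move=> *; apply/val_inj; apply: normrM. Qed.
Lemma creal_ler_def (x y : creal) : (x <= y) = (creal_norm (y - x) == y - x).
Proof. exact: ler_def. Qed.
HB.instance Definition _ := Num.isNumRing.Build creal
  creal_addr_gt0 creal_ger_leVge creal_normrM creal_ler_def.

Lemma creal_leE (x y : creal) : (x <= y) = (val x <= val y). Proof. by []. Qed.
Lemma creal_ltE (x y : creal) : (x < y) = (val x < val y). Proof. by []. Qed.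
End RealElements.

Section RealInequalities.
Variable R : realFieldType.
Implicit Types a b p q r s : R.

Lemma le_of_sqr a b : 0 <= b -> a * a <= b * b -> a <= b.
Proof. by move=> b0 h; nra. Qed.

Lemma eq_of_sqr a b : 0 <= a -> 0 <= b -> a * a = b * b -> a = b.
Proof. by move=> a0 b0 h; apply/le_anti/andP; split; apply: le_of_sqr; rewrite // h. Qed.

Lemma sqr_le a b : 0 <= a -> a <= b -> a * a <= b * b.
Proof. by move=> a0 ab; apply: ler_pM. Qed.

Lemma cauchy_schwarz2 p q r s :
  (p * q + r * s) * (p * q + r * s) <= (p * p + r * r) * (q * q + s * s).
Proof. by have := sqr_ge0 (p * s - r * q); nra. Qed.

(* ... and in dimension 4, with the Euclidean norms a and b given through
   their squares (Lagrange's identity). *)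
Lemma cauchy_schwarz4 (x1 x2 x3 x4 y1 y2 y3 y4 a b : R) :
  0 <= a -> 0 <= b ->
  a * a = x1 * x1 + x2 * x2 + x3 * x3 + x4 * x4 ->
  b * b = y1 * y1 + y2 * y2 + y3 * y3 + y4 * y4 ->
  x1 * y1 + x2 * y2 + x3 * y3 + x4 * y4 <= a * b.
Proof.
move=> a0 b0 ha hb; apply: le_of_sqr; first exact: mulr_ge0.
have -> : (a * b) * (a * b) = (a * a) * (b * b) by ring.
rewrite ha hb -subr_ge0.
set L := (x1*y2 - x2*y1)^+2 + (x1*y3 - x3*y1)^+2 + (x1*y4 - x4*y1)^+2 +
  (x2*y3 - x3*y2)^+2 + (x2*y4 - x4*y2)^+2 + (x3*y4 - x4*y3)^+2.
suff <- : L = (x1 * x1 + x2 * x2 + x3 * x3 + x4 * x4) *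
    (y1 * y1 + y2 * y2 + y3 * y3 + y4 * y4) -
  (x1 * y1 + x2 * y2 + x3 * y3 + x4 * y4) * (x1 * y1 + x2 * y2 + x3 * y3 + x4 * y4).
  by rewrite /L !addr_ge0 ?sqr_ge0.
by rewrite /L; ring.
Qed.

Lemma minkowski4 (x1 x2 x3 x4 y1 y2 y3 y4 z1 z2 z3 z4 a b h : R) :
  0 <= z1 -> 0 <= z2 -> 0 <= z3 -> 0 <= z4 ->
  0 <= a -> 0 <= b ->
  z1 <= x1 + y1 -> z2 <= x2 + y2 -> z3 <= x3 + y3 -> z4 <= x4 + y4 ->
  a * a = x1 * x1 + x2 * x2 + x3 * x3 + x4 * x4 ->
  b * b = y1 * y1 + y2 * y2 + y3 * y3 + y4 * y4 ->
  h * h = z1 * z1 + z2 * z2 + z3 * z3 + z4 * z4 ->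
  h <= a + b.
Proof.
move=> g1 g2 g3 g4 a0 b0 e1 e2 e3 e4 ha hb hh.
apply: le_of_sqr; first exact: addr_ge0.
have cs := cauchy_schwarz4 a0 b0 ha hb.
have s1 := sqr_le g1 e1; have s2 := sqr_le g2 e2.
have s3 := sqr_le g3 e3; have s4 := sqr_le g4 e4.
rewrite hh; nra.
Qed.

Lemma frobenius_submul (a00 a01 a10 a11 b00 b01 b10 b11 z00 z01 z10 z11 a b h : R) :
  0 <= z00 -> 0 <= z01 -> 0 <= z10 -> 0 <= z11 -> 0 <= a -> 0 <= b ->
  z00 <= a00 * b00 + a01 * b10 -> z01 <= a00 * b01 + a01 * b11 ->
  z10 <= a10 * b00 + a11 * b10 -> z11 <= a10 * b01 + a11 * b11 ->
  a * a = a00 * a00 + a01 * a01 + a10 * a10 + a11 * a11 ->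
  b * b = b00 * b00 + b01 * b01 + b10 * b10 + b11 * b11 ->
  h * h = z00 * z00 + z01 * z01 + z10 * z10 + z11 * z11 ->
  h <= a * b.
Proof.
move=> g00 g01 g10 g11 a0 b0 e00 e01 e10 e11 ha hb hh.
apply: le_of_sqr; first exact: mulr_ge0.
have -> : a * b * (a * b) = (a * a) * (b * b) by ring.
rewrite hh ha hb.
have s00 := le_trans (sqr_le g00 e00) (cauchy_schwarz2 a00 b00 a01 b10).
have s01 := le_trans (sqr_le g01 e01) (cauchy_schwarz2 a00 b01 a01 b11).
have s10 := le_trans (sqr_le g10 e10) (cauchy_schwarz2 a10 b00 a11 b10).
have s11 := le_trans (sqr_le g11 e11) (cauchy_schwarz2 a10 b01 a11 b11).
lra.
Qed.
End RealInequalities.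

(* The numerical core of the analysis of an almost idempotent 2x2 matrix A
   with trace tau near 2 is stated on the relevant moduli: x = |tau - 2|,
   v = |tau - 1|, w = |tau|, T = |tr E|, K = |2 tr E - tau (tau - 2)| and
   D = |det A|, where E = A^2 - A has norm at most dl < 3/100.
   First, x cannot lie in an interval [lo, hi] on which the lower bound
   (1 - hi)^2 ((2 - hi) lo - 2 T) for v^2 K exceeds the defect budget. *)
Lemma trace_gap_excluded (R : realFieldType) (x v w T K lo hi : R) :
  0 <= v -> 0 <= K -> T <= 43/1000 -> v * v * K <= 18/10000 ->
  w * x <= K + 2 * T -> 1 <= v + x -> 2 <= w + x ->
  0 <= lo -> lo <= x -> x <= hi -> hi <= 1 ->
  18/10000 < (1 - hi) * (1 - hi) * ((2 - hi) * lo - 86/1000) -> False.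
Proof.
move=> v0 K0 T_small vK_small wx_le vx_ge wx_ge lo0 lox xhi hi1 big.
have wx : (2 - hi) * lo <= w * x.
  by apply: ler_pM => //; clear -hi1 wx_ge xhi; lra.
have vv : (1 - hi) * (1 - hi) <= v * v.
  by apply: ler_pM => //; clear -hi1 vx_ge xhi; lra.
have k : (2 - hi) * lo - 86/1000 <= K by clear -wx wx_le T_small; lra.
have k0 : 0 <= (2 - hi) * lo - 86/1000.
  case: (lerP 0 ((2 - hi) * lo - 86/1000)) => // k_neg.
  have : (1 - hi) * (1 - hi) * ((2 - hi) * lo - 86/1000) <= 0.
    by apply: mulr_ge0_le0; [rewrite mulr_ge0 // subr_ge0 | exact: ltW].
  by clear -big; lra.
have : (1 - hi) * (1 - hi) * ((2 - hi) * lo - 86/1000) <= v * v * K.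
  by apply: ler_pM => //; rewrite mulr_ge0 // subr_ge0.
by clear -big vK_small; lra.
Qed.

(* Excluding [0.1, 0.95] this way, x <= 0.1, hence the bounds on D and v. *)
Lemma near_idempotent_numerics (R : realFieldType) (x v w T K D dl : R) :
  0 <= x -> 0 <= v -> 0 <= w -> 0 <= T -> 0 <= K -> 0 <= dl ->
  dl < 3/100 -> x < 95/100 ->
  T * T + v * v * K <= 2 * (dl * dl) ->
  w * x <= K + 2 * T -> 1 <= v + x -> 2 <= w + x -> v <= x + 1 ->
  w * v <= 2 * D + T ->
  83/100 <= D /\ v <= 11/10.
Proof.
move=> x0 v0 w0 T0 K0 dl0 dl_small x_small defect wx_le vx_ge wx_ge v_le wv_le.
have dl2 : dl * dl <= 3/100 * (3/100).
  by apply: ler_pM => //; clear -dl_small; lra.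
have TT0 := mulr_ge0 T0 T0; have vK0 := mulr_ge0 (mulr_ge0 v0 v0) K0.
have T_small : T <= 43/1000.
  case: (lerP T (43/1000)) => // T_big.
  have : 43/1000 * (43/1000) <= T * T by apply: ler_pM => //; clear -T_big; lra.
  by clear -defect dl2 vK0; lra.
have vK_small : v * v * K <= 18/10000 by clear -defect dl2 TT0; lra.
have excl := trace_gap_excluded v0 K0 T_small vK_small wx_le vx_ge wx_ge.
have x_near0 : x <= 1/10.
  case: (lerP x (1/10)) => // x1; exfalso.
  case: (lerP x (3/10)) => x3; first by apply: (excl (1/10) (3/10)); clear -x1 x3; lra.
  case: (lerP x (8/10)) => x8; first by apply: (excl (3/10) (8/10)); clear -x3 x8; lra.
  case: (lerP x (9/10)) => x9; first by apply: (excl (8/10) (9/10)); clear -x8 x9; lra.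
  by apply: (excl (9/10) (95/100)); clear -x9 x_small; lra.
have wv_big : 19/10 * (9/10) <= w * v.
  by apply: ler_pM => //; clear -x_near0 vx_ge wx_ge; lra.
by split; clear -wv_big wv_le T_small x_near0 v_le; lra.
Qed.

Section MatrixIdentities2.
Variable K : comPzRingType.
Implicit Types A Q X : 'M[K]_2.

Lemma ord2_cases (i : 'I_2) : i = 0 \/ i = 1.
Proof. by case: i => [[|[|//]]] ?; [left|right]; apply: val_inj. Qed.

Lemma mulmx2E A X i j : (A *m X) i j = A i 0 * X 0 j + A i 1 * X 1 j.
Proof.
rewrite mxE big_ord_recr big_ord_recr big_ord0 /= add0r.
by congr (_ + _); congr (A i _ * X _ j); apply: val_inj.
Qed.

Lemma mxtrace2E A : \tr A = A 0 0 + A 1 1.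
Proof.
rewrite /mxtrace big_ord_recr big_ord_recr big_ord0 /= add0r.
by congr (_ + _); congr (A _ _); apply: val_inj.
Qed.

Definition det2 A := A 0 0 * A 1 1 - A 0 1 * A 1 0.

Lemma cayley_hamilton2 A : A *m A = \tr A *: A - (det2 A)%:M.
Proof.
apply/matrixP => i j; rewrite mulmx2E !mxE mxtrace2E /det2.
by case: (ord2_cases i) => ->; case: (ord2_cases j) => -> /=; ring.
Qed.

(* Multiplying Cayley-Hamilton by X: det A acts on X like multiplication by
   (tr A - 1) A, up to the idempotency defect A^2 - A of A. *)
Lemma det2_scale A X : det2 A *: X = (\tr A - 1) *: (A *m X) - (A *m A - A) *m X.
Proof.
rewrite mulmxBl cayley_hamilton2 mulmxBl -scalemxAl mul_scalar_mx.
by apply/matrixP => i j; rewrite !mxE; ring.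
Qed.

Lemma defect_entry A i j : (A *m A - A) i j = A i 0 * A 0 j + A i 1 * A 1 j - A i j.
Proof. by rewrite mxE mulmx2E mxE. Qed.

Lemma defect_discriminant A (E := A *m A - A) (tau := \tr A) :
  (E 0 0 - E 1 1) ^+ 2 + 4%:R * (E 0 1 * E 1 0) =
  (tau - 1) * (tau - 1) * (2%:R * \tr E - tau * (tau - 2%:R)).
Proof. by rewrite /E /tau !mxtrace2E !defect_entry; ring. Qed.

Lemma idempotent_reflection Q : Q *m Q = Q ->
  (Q - (1%:M - Q)) *m (Q - (1%:M - Q)) = 1%:M.
Proof.
move=> hQ; rewrite !mulmxBl !mulmxBr !mul1mx !mulmx1 hQ !subrr.
by rewrite !subr0 addrAC subrr sub0r opprK addrC subrK.
Qed.

Lemma idempotent_complement Q : Q *m Q = Q -> (1%:M - Q) *m (1%:M - Q) = 1%:M - Q.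
Proof. by move=> hQ; rewrite mulmxBl !mulmxBr !mul1mx ?mulmx1 hQ subrr subr0. Qed.
End MatrixIdentities2.

(* A rank-one 2x2 idempotent has trace 1: by Cayley-Hamilton
   (tr P - 1) P = det P, and det P = 0 since P is not invertible. *)
Lemma rank1_idempotent_trace (F : fieldType) (P : 'M[F]_2) :
  P *m P = P -> \rank P = 1%N -> \tr P = 1.
Proof.
move=> hP hr.
have hs : (\tr P - 1) *: P = (det2 P)%:M.
  have e := cayley_hamilton2 P; rewrite hP in e.
  by rewrite scalerBl scale1r {3}e opprB addrC subrK.
have hd : det2 P = 0.
  case: (eqVneq (det2 P) 0) => // nz.
  have : P *m (((\tr P - 1) / det2 P)%:M) = 1%:M.
    by rewrite mul_mx_scalar mulrC -scalerA hs scale_scalar_mx mulVf.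
  by move/mulmx1_unit => [/mxrank_unit]; rewrite hr.
have P0 : P != 0 by rewrite -mxrank_eq0 hr.
have : (\tr P - 1) *: P == 0 by rewrite hs hd raddf0.
by rewrite scalemx_eq0 (negPf P0) orbF subr_eq0 => /eqP.
Qed.

Section HilbertSchmidt.
Variable C : numClosedFieldType.
Local Notation R := (creal C).
Implicit Types (z u w : C) (A B : 'M[C]_2).

Definition cmod z : R := CReal (normr_real z).

Lemma cmod_ge0 z : 0 <= cmod z. Proof. by rewrite creal_leE /= normr_ge0. Qed.
Lemma cmodM z u : cmod (z * u) = cmod z * cmod u.
Proof. by apply: val_inj; rewrite /= normrM. Qed.
Lemma cmodN z : cmod (- z) = cmod z. Proof. by apply: val_inj; rewrite /= normrN. Qed.
Lemma cmod0 : cmod 0 = 0. Proof. by apply: val_inj; rewrite /= normr0. Qed.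
Lemma cmod1 : cmod 1 = 1. Proof. by apply: val_inj; rewrite /= normr1. Qed.
Lemma cmod_nat n : cmod n%:R = n%:R.
Proof. by apply: val_inj; rewrite /= rmorph_nat normr_nat. Qed.

Lemma cmod_split z u w : z = u + w -> cmod z <= cmod u + cmod w.
Proof. by move=> ->; rewrite creal_leE /= ler_normD. Qed.

Lemma cmod_parallelogram z u : cmod (z + u) * cmod (z + u) + cmod (z - u) * cmod (z - u)
  = 2 * (cmod z * cmod z) + 2 * (cmod u * cmod u).
Proof.
apply: val_inj; rewrite !rmorphD !rmorphM rmorph_nat /= -!expr2 !normCK.
by rewrite !rmorphD !rmorphN /=; ring.
Qed.

Lemma hsnorm2E A : hsnorm A =
  sqrtC (`|A 0 0| ^+ 2 + `|A 0 1| ^+ 2 + `|A 1 0| ^+ 2 + `|A 1 1| ^+ 2).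
Proof.
rewrite /hsnorm mxtrace2E !mulmx2E /adjmx !mxE !normCK; congr sqrtC.
rewrite [A 0 0 * _]mulrC [A 1 0 * _]mulrC [A 0 1 * _]mulrC [A 1 1 * _]mulrC.
ring.
Qed.

Lemma hsnorm_ge0 A : 0 <= hsnorm A.
Proof. by rewrite hsnorm2E sqrtC_ge0 !addr_ge0 ?exprn_ge0 ?normr_ge0. Qed.

Definition hsn A : R := CReal (ger0_real (hsnorm_ge0 A)).

Lemma hsn_ge0 A : 0 <= hsn A. Proof. by rewrite creal_leE /= hsnorm_ge0. Qed.

Lemma hsn_sqr A : hsn A * hsn A = cmod (A 0 0) * cmod (A 0 0) + cmod (A 0 1) * cmod (A 0 1)
   + cmod (A 1 0) * cmod (A 1 0) + cmod (A 1 1) * cmod (A 1 1).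
Proof. by apply: val_inj; rewrite /= -!expr2 hsnorm2E sqrtCK. Qed.

Lemma hsnD A B : hsn (A + B) <= hsn A + hsn B.
Proof.
apply: (minkowski4 (x1 := cmod (A 0 0)) (x2 := cmod (A 0 1)) (x3 := cmod (A 1 0))
  (x4 := cmod (A 1 1)) (y1 := cmod (B 0 0)) (y2 := cmod (B 0 1)) (y3 := cmod (B 1 0))
  (y4 := cmod (B 1 1)) (z1 := cmod ((A + B) 0 0)) (z2 := cmod ((A + B) 0 1))
  (z3 := cmod ((A + B) 1 0)) (z4 := cmod ((A + B) 1 1))); rewrite ?cmod_ge0 ?hsn_ge0 ?hsn_sqr //;
  by apply: cmod_split; rewrite mxE.
Qed.

Lemma hsnN A : hsn (- A) = hsn A.
Proof. by apply: val_inj; rewrite /= !hsnorm2E !mxE !normrN. Qed.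

Lemma hsnB A B : hsn (A - B) = hsn (B - A).
Proof. by rewrite -hsnN opprB. Qed.

Lemma hsnZ z A : hsn (z *: A) = cmod z * hsn A.
Proof.
apply: eq_of_sqr; rewrite ?hsn_ge0 ?mulr_ge0 ?cmod_ge0 ?hsn_ge0 //.
have -> : cmod z * hsn A * (cmod z * hsn A) = (cmod z * cmod z) * (hsn A * hsn A) by ring.
by rewrite !hsn_sqr !mxE !cmodM; ring.
Qed.

Lemma hsnM A B : hsn (A *m B) <= hsn A * hsn B.
Proof.
apply: (frobenius_submul (a00 := cmod (A 0 0)) (a01 := cmod (A 0 1))
  (a10 := cmod (A 1 0)) (a11 := cmod (A 1 1)) (b00 := cmod (B 0 0))
  (b01 := cmod (B 0 1)) (b10 := cmod (B 1 0)) (b11 := cmod (B 1 1))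
  (z00 := cmod ((A *m B) 0 0)) (z01 := cmod ((A *m B) 0 1))
  (z10 := cmod ((A *m B) 1 0)) (z11 := cmod ((A *m B) 1 1)));
  rewrite ?cmod_ge0 ?hsn_ge0 ?hsn_sqr //;
  by rewrite -!cmodM; apply: cmod_split; rewrite mulmx2E.
Qed.

(* Each diagonal entry is bounded by the norm, hence so is half the trace. *)
Lemma hsn_trace A : cmod (\tr A) <= 2 * hsn A.
Proof.
have sq := hsn_sqr A.
have [q0 r0] := (mulr_ge0 (cmod_ge0 (A 0 1)) (cmod_ge0 (A 0 1)),
                 mulr_ge0 (cmod_ge0 (A 1 0)) (cmod_ge0 (A 1 0))).
have p0 := mulr_ge0 (cmod_ge0 (A 0 0)) (cmod_ge0 (A 0 0)).
have s0 := mulr_ge0 (cmod_ge0 (A 1 1)) (cmod_ge0 (A 1 1)).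
have a00 : cmod (A 0 0) <= hsn A by apply: le_of_sqr; rewrite ?hsn_ge0 // sq; lra.
have a11 : cmod (A 1 1) <= hsn A by apply: le_of_sqr; rewrite ?hsn_ge0 // sq; lra.
have := cmod_split (mxtrace2E A); clear -a00 a11; lra.
Qed.

Lemma hsn1_ge1 : 1 <= hsn (1%:M : 'M[C]_2).
Proof.
apply: le_of_sqr; first exact: hsn_ge0.
by rewrite hsn_sqr !mxE /= cmod1 cmod0; lra.
Qed.

(* An idempotent and its complement are at distance at least 1, since the
   reflection between them squares to the identity. *)
Lemma idempotent_complement_far Q : Q *m Q = Q -> 1 <= hsn (Q - (1%:M - Q)).
Proof.
move=> hQ; apply: le_of_sqr; first exact: hsn_ge0.
by rewrite mul1r (le_trans hsn1_ge1) // -{1}(idempotent_reflection hQ) hsnM.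
Qed.
End HilbertSchmidt.

Section NearIdempotent.
Variable C : numClosedFieldType.
Local Notation R := (creal C).
Implicit Types A F G : 'M[C]_2.

(* By the discriminant identity, a small idempotency defect E = A^2 - A
   forces both tr E and (tr A - 1)^2 (2 tr E - tr A (tr A - 2)) to be small. *)
Lemma defect_bound A (E := A *m A - A) (tau := \tr A) :
  cmod (\tr E) * cmod (\tr E) +
  cmod (tau - 1) * cmod (tau - 1) * cmod (2%:R * \tr E - tau * (tau - 2%:R))
  <= 2 * (hsn E * hsn E).
Proof.
have disc : cmod ((E 0 0 - E 1 1) ^+ 2 + 4%:R * (E 0 1 * E 1 0)) <=
    cmod (E 0 0 - E 1 1) * cmod (E 0 0 - E 1 1) + 4 * (cmod (E 0 1) * cmod (E 1 0)).
  by rewrite (le_trans (cmod_split (erefl _))) // expr2 !cmodM cmod_nat.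
rewrite defect_discriminant !cmodM in disc.
have amgm := sqr_ge0 (cmod (E 0 1) - cmod (E 1 0)).
have para := cmod_parallelogram (E 0 0) (E 1 1).
rewrite hsn_sqr (mxtrace2E E); rewrite (mxtrace2E E) in disc.
move: (cmod (E 0 0)) (cmod (E 0 1)) (cmod (E 1 0)) (cmod (E 1 1))
  (cmod (E 0 0 + E 1 1)) (cmod (E 0 0 - E 1 1)) (cmod (tau - 1) * cmod (tau - 1)
  * cmod (2%:R * (E 0 0 + E 1 1) - tau * (tau - 2%:R))) disc amgm para.
move=> p q r s t d k; rewrite expr2; lra.
Qed.

Lemma near_idempotent_det A (dl : R) : 0 <= dl -> dl < 3/100 ->
  hsn (A *m A - A) <= dl -> cmod (\tr A - 2%:R) < 95/100 ->
  83/100 <= cmod (det2 A) /\ cmod (\tr A - 1) <= 11/10.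
Proof.
move=> dl0 dl_small hE x_small.
set E := A *m A - A; set tau := \tr A; set tE := \tr E.
have trE : tE = tau * tau - tau - 2%:R * det2 A.
  by rewrite /tE /tau /E !mxtrace2E !defect_entry /det2; ring.
have defect : cmod tE * cmod tE + cmod (tau - 1) * cmod (tau - 1) *
    cmod (2%:R * tE - tau * (tau - 2%:R)) <= 2 * (dl * dl).
  apply: (le_trans (defect_bound A)); rewrite ler_pM2l //.
  by apply: ler_pM; rewrite ?hsn_ge0.
apply: (near_idempotent_numerics (w := cmod tau) _ _ _ _ _ dl0 dl_small x_small defect);
  rewrite ?cmod_ge0 // -?cmod_nat -?cmodM.
- by rewrite -(cmodN (2%:R * tE - _)); apply: cmod_split; ring.
- by rewrite -cmod1 -(cmodN (\tr A - 2%:R)); apply: cmod_split; rewrite /tau; ring.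
- by rewrite -(cmodN (\tr A - 2%:R)); apply: cmod_split; rewrite /tau; ring.
- by rewrite -cmod1; apply: cmod_split; rewrite /tau; ring.
- by apply: cmod_split; rewrite trE; ring.
Qed.

Lemma near_idempotent_cancel A F G (dl : R) : 0 <= dl -> dl < 3/100 ->
  hsn (A *m A - A) <= dl -> cmod (\tr A - 2%:R) < 95/100 ->
  hsn (A *m G - G) <= dl -> hsn (A *m F - G) <= dl ->
  hsn (G - F) <= 11/4 * dl.
Proof.
move=> dl0 dl_small hE x_small hG hF.
have [hD hv] := near_idempotent_det dl0 dl_small hE x_small.
have hAX : hsn (A *m (G - F)) <= 2 * dl.
  have -> : A *m (G - F) = (A *m G - G) - (A *m F - G).
    by rewrite mulmxBr opprB addrA subrK.
  apply: (le_trans (hsnD _ _)); rewrite hsnN; clear -hG hF; lra.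
have hX : cmod (det2 A) * hsn (G - F) <=
    cmod (\tr A - 1) * hsn (A *m (G - F)) + hsn (A *m A - A) * hsn (G - F).
  rewrite -hsnZ det2_scale; apply: (le_trans (hsnD _ _)); rewrite hsnN hsnZ.
  by apply: lerD => //; apply: hsnM.
have n0 := hsn_ge0 (G - F).
have p1 : cmod (\tr A - 1) * hsn (A *m (G - F)) <= 11/10 * (2 * dl).
  by apply: ler_pM; rewrite ?cmod_ge0 ?hsn_ge0.
have p2 : hsn (A *m A - A) * hsn (G - F) <= dl * hsn (G - F) := ler_wpM2r n0 hE.
have p3 : dl * hsn (G - F) <= 3/100 * hsn (G - F) := ler_wpM2r n0 (ltW dl_small).
have p4 : 83/100 * hsn (G - F) <= cmod (det2 A) * hsn (G - F) := ler_wpM2r n0 hD.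
clear -hX p1 p2 p3 p4 dl0; lra.
Qed.
End NearIdempotent.

Lemma absorption (C : numClosedFieldType) (S : Type) (mul : S -> S -> S)
  (theta : S -> 'M[C]_2) (delta : C) (Q : 'M[C]_2)
  (hS : is_semilattice mul) (hd0 : 0 <= delta) (hd1 : delta < 3%:R / 100%:R)
  (htheta : forall e f : S, hsnorm (theta e *m theta f - theta (mul e f)) <= delta)
  (hQ : Q *m Q = Q) (htrQ : \tr Q = 1)
  (hS1 : forall x : S, Sk theta 1 x ->
           in_cball Q (12%:R * delta) (theta x) \/
           in_cball (1%:M - Q) (12%:R * delta) (theta x))
  (e : S) (he : Sk theta 2 e) (f : S) :
  in_cball Q (12%:R * delta) (theta f) -> in_cball Q (12%:R * delta) (theta (mul e f)).
Proof.
have [mulA [_ mulI]] := hS.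
pose dl : creal C := CReal (ger0_real hd0).
have dl0 : 0 <= dl by rewrite creal_leE.
have dl_small : dl < 3/100 by rewrite creal_ltE fmorph_div !rmorph_nat.
have ball_dl M : (hsnorm M <= delta) = (hsn M <= dl) by [].
have ball_12dl M : (hsnorm M <= 12%:R * delta) = (hsn M <= 12 * dl).
  by rewrite creal_leE rmorphM rmorph_nat.
have Sk_cmod x k : Sk theta k x = (cmod (\tr (theta x) - k%:R) < 95/100).
  by rewrite /Sk creal_ltE fmorph_div !rmorph_nat.
rewrite /in_cball ball_12dl => hf.
have hE : hsn (theta e *m theta e - theta e) <= dl.
  by rewrite -ball_dl -{3}(mulI e) htheta.
have hG : hsn (theta e *m theta (mul e f) - theta (mul e f)) <= dl.
  by rewrite -ball_dl -{3}(mulI e) -mulA htheta.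
have hF : hsn (theta e *m theta f - theta (mul e f)) <= dl by rewrite -ball_dl htheta.
set A := theta e in hE hG hF *; set F := theta f in hF hf *.
set G := theta (mul e f) in hG hF *.
have hx : cmod (\tr A - 2%:R) < 95/100 by rewrite -Sk_cmod.
have hGF := near_idempotent_cancel dl0 dl_small hE hx hG hF.
have hQG : hsn (Q - G) <= 4425/10000.
  have := hsnD (Q - F) (F - G); rewrite addrA subrK (hsnB F G).
  by move: hGF hf; clear -dl0 dl_small; lra.
have G_S1 : Sk theta 1 (mul e f).
  rewrite Sk_cmod -/G -cmodN.
  have -> : - (\tr G - 1%:R) = \tr (Q - G).
    by rewrite -htrQ !mxtrace2E !mxE; ring.
  by have := hsn_trace (Q - G); clear -hQG; lra.
case: (hS1 _ G_S1); rewrite /in_cball ball_12dl -/G // => hG1; exfalso.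
have := hsnD (Q - G) (G - (1%:M - Q)); rewrite addrA subrK (hsnB G).
have := idempotent_complement_far hQ.
by move: hQG hG1; clear -dl0 dl_small; lra.
Qed.

Theorem propositionp (C : numClosedFieldType) (S : Type) (mul : S -> S -> S)
  (theta : S -> 'M[C]_2) (delta : C) (P : 'M[C]_2)
  (hS : is_semilattice mul)
  (hd0 : 0 <= delta) (hd1 : delta < 3%:R / 100%:R)
  (htheta : forall e f : S, hsnorm (theta e *m theta f - theta (mul e f)) <= delta)
  (hPidem : P *m P = P) (hPrank : \rank P = 1%N)
  (hS1 : forall x : S, Sk theta 1 x ->
           in_cball P (12%:R * delta) (theta x) \/
           in_cball (1%:M - P) (12%:R * delta) (theta x))
  (e : S) (he : Sk theta 2 e) :
  (forall f : S, in_cball P (12%:R * delta) (theta f) ->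
                 in_cball P (12%:R * delta) (theta (mul e f))) /\
  (forall f : S, in_cball (1%:M - P) (12%:R * delta) (theta f) ->
                 in_cball (1%:M - P) (12%:R * delta) (theta (mul e f))).
Proof.
have trP := rank1_idempotent_trace hPidem hPrank.
split=> f; first exact: (absorption hS hd0 hd1 htheta hPidem trP hS1 he).
have trQ : \tr (1%:M - P) = 1.
  rewrite !mxtrace2E !mxE /= in trP *.
  by rewrite addrACA -opprD trP addrK.
have hS1' x : Sk theta 1 x -> in_cball (1%:M - P) (12%:R * delta) (theta x) \/
    in_cball (1%:M - (1%:M - P)) (12%:R * delta) (theta x).
  have -> : 1%:M - (1%:M - P) = P by rewrite opprB addrC subrK.
  by move=> /hS1 [] ?; [right | left].
exact: (absorption hS hd0 hd1 htheta (idempotent_complement hPidem) trQ hS1' he).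
Qed.
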